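(* Let $X$ be a finished continuum which is irreducible about $n$ points but about no fewer than $n$ points, and let $\mathcal D(X)$ be its Vought decomposition. Then every $T$-closed set $A \subset X$ is a union of elements of $\mathcal D(X)$; that is, $A = \bigcup_{x \in A} D(x)$, where $D(x)$ denotes the element of $\mathcal D(X)$ containing $x$.
   Context: A continuum is a non-empty compact connected metric space. A continuum $X$ is irreducible about a set $A\subset X$ if no proper subcontinuum of $X$ contains $A$; $X$ is finitely irreducible if it is irreducible about some finite subset, and irreducible if it is irreducible about some two-point subset. A continuum is decomposable if it is the union of two proper subcontinua, and indecomposable otherwise. A finished continuum is a finitely irreducible continuum none of whose indecomposable subcontinua has non-empty interior relative to it. For a continuum $X$ and a non-empty set $A\subset X$, $T(A)$ is the set of $x\in X$ such that every subcontinuum of $X\setminus A$ containing $x$ has empty interior relative to $X$; $A$ is $T$-closed if $T(A)=A$. Note $A\subset T(A)$ and $A\subset B$ implies $T(A)\subset T(B)$. If $X$ is a finished continuum irreducible about $n$ points but no fewer, its Vought decomposition is $\mathcal D(X)=\{T^n(\{x\}) : x\in X\}$, where $T^n$ is the $n$-fold composition of $T$. (By a theorem of Vought, $\mathcal D(X)$ is an upper semicontinuous partition of $X$ into continua with empty interior in $X$, and the quotient $X/\mathcal D(X)$ is a finite tree with $n$ endpoints.) *)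

From Stdlib Require Import Reals List.
Open Scope R_scope.

Section Continua.
Variable X : Type.
Variable d : X -> X -> R.

Definition is_metric : Prop :=
  (forall x y, 0 <= d x y) /\
  (forall x y, d x y = 0 <-> x = y) /\
  (forall x y, d x y = d y x) /\
  (forall x y z, d x z <= d x y + d y z).

Definition ball (x : X) (r : R) : X -> Prop := fun y => d x y < r.

Definition subset (A B : X -> Prop) : Prop := forall x, A x -> B x.

Definition is_open (U : X -> Prop) : Prop :=
  forall x, U x -> exists r, 0 < r /\ subset (ball x r) U.

Definition compact (K : X -> Prop) : Prop :=
  forall (I : Type) (U : I -> X -> Prop),
    (forall i, is_open (U i)) ->
    (forall x, K x -> exists i, U i x) ->
    exists l : list I, forall x, K x -> exists i, In i l /\ U i x.

Definition connected (K : X -> Prop) : Prop :=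
  ~ exists U V : X -> Prop,
      is_open U /\ is_open V /\
      (forall x, K x -> U x \/ V x) /\
      (forall x, K x -> U x -> V x -> False) /\
      (exists x, K x /\ U x) /\ (exists x, K x /\ V x).

Definition subcontinuum (K : X -> Prop) : Prop :=
  (exists x, K x) /\ compact K /\ connected K.

Definition is_continuum : Prop := subcontinuum (fun _ => True).

Definition empty_interior (A : X -> Prop) : Prop :=
  forall x r, 0 < r -> ~ subset (ball x r) A.

Definition whole (K : X -> Prop) : Prop := forall x, K x.

Definition irreducible_about (A : X -> Prop) : Prop :=
  forall K, subcontinuum K -> subset A K -> whole K.

Definition finitely_irreducible : Prop :=
  exists l : list X, irreducible_about (fun x => In x l).

Definition irreducible_about_exactly (n : nat) : Prop :=
  (exists l : list X, NoDup l /\ length l = n /\ irreducible_about (fun x => In x l)) /\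
  (forall l : list X, NoDup l -> (length l < n)%nat ->
     ~ irreducible_about (fun x => In x l)).

Definition indecomposable (K : X -> Prop) : Prop :=
  subcontinuum K /\
  ~ exists K1 K2 : X -> Prop,
      subcontinuum K1 /\ subcontinuum K2 /\
      subset K1 K /\ subset K2 K /\
      (exists x, K x /\ ~ K1 x) /\ (exists x, K x /\ ~ K2 x) /\
      (forall x, K x <-> (K1 x \/ K2 x)).

Definition finished : Prop :=
  finitely_irreducible /\
  forall K, indecomposable K -> empty_interior K.

Definition T (A : X -> Prop) : X -> Prop :=
  fun x => forall K, subcontinuum K -> subset K (fun y => ~ A y) -> K x ->
           empty_interior K.

Fixpoint Tn (n : nat) (A : X -> Prop) : X -> Prop :=
  match n with
  | O => A
  | S m => T (Tn m A)
  end.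

Definition T_closed (A : X -> Prop) : Prop := forall x, T A x <-> A x.

Definition vought_elem (n : nat) (x : X) : X -> Prop := Tn n (fun y => y = x).

End Continua.

(* T is extensive and monotone, so a T-closed set A containing x contains
   every iterate T^k({x}); in particular it contains the Vought element
   T^n({x}) of each of its points, while x itself lies in T^n({x}). *)
From Stdlib Require Import Reals List.

Section TOperator.
Variable X : Type.
Variable d : X -> X -> R.

Lemma T_extensive (A : X -> Prop) : subset X A (T X d A).
Proof. intros x Ax K _ K_off_A Kx. exfalso. exact (K_off_A x Kx Ax). Qed.

Lemma T_monotone (A B : X -> Prop) :
  subset X A B -> subset X (T X d A) (T X d B).
Proof.
  intros AB x TAx K K_cont K_off_B Kx. apply (TAx K K_cont); [|exact Kx].
  intros y Ky Ay. exact (K_off_B y Ky (AB y Ay)).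
Qed.

Lemma Tn_extensive (k : nat) (A : X -> Prop) : subset X A (Tn X d k A).
Proof.
  induction k as [|k IHk]; simpl; intros x Ax; [exact Ax|].
  apply T_extensive, IHk, Ax.
Qed.

Lemma Tn_sub_T_closed (k : nat) (A B : X -> Prop) :
  subset X A B -> T_closed X d B -> subset X (Tn X d k A) B.
Proof.
  intros AB B_closed. induction k as [|k IHk]; simpl; [exact AB|].
  intros x Tx. apply B_closed. exact (T_monotone _ _ IHk x Tx).
Qed.

End TOperator.

Theorem mainTheorem1 (X : Type) (d : X -> X -> R) (n : nat) :
  is_metric X d ->
  is_continuum X d ->
  finished X d ->
  irreducible_about_exactly X d n ->
  forall A : X -> Prop,
    (exists a, A a) ->
    T_closed X d A ->
    forall y, A y <-> exists x, A x /\ vought_elem X d n x y.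
Proof.
  intros _ _ _ _ A _ A_closed y. split.
  - intros Ay. exists y. split; [exact Ay|].
    apply Tn_extensive. reflexivity.
  - intros [x [Ax Dxy]].
    apply (Tn_sub_T_closed X d n (fun z => z = x) A); [|exact A_closed|exact Dxy].
    intros z ->. exact Ax.
Qed.
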